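(* Let $G$ be a connected graph. For any $i\in V(G)$, \[ r_i(G)\leq\frac{1}{\alpha_i(G)}. \]
   Context: $G$ is a finite simple graph with vertex set $[n]$ and Laplacian matrix $\mathcal{L}_G=D-A$. For a vertex $i$, $\alpha_i(G)=\min\{\mathbf{x}^\top\mathcal{L}_G\mathbf{x} : \mathbf{x}\in\mathbb{R}^n_+,\ \sum_j x_j^2=1,\ x_i=0\}$ (the inverse Perron value of $i$); for connected $G$ this equals the smallest eigenvalue of the principal submatrix $\mathcal{L}_G(i)$ obtained by deleting row and column $i$. The resistance distance $r_{ij}(G)$ is the effective resistance between $i$ and $j$ when every edge is a unit resistor, and the resistance eccentricity is $r_i(G)=\max_{j\in V(G)}r_{ij}(G)$. *)

From HB Require Import structures.
From mathcomp Require Import all_boot all_order all_algebra.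
From mathcomp Require Import classical_sets reals.
Set Implicit Arguments. Unset Strict Implicit. Unset Printing Implicit Defensive.
Import Order.TTheory GRing.Theory Num.Theory.
Local Open Scope ring_scope.
Local Open Scope classical_set_scope.

Definition simple_graph (n : nat) (e : rel 'I_n) : Prop :=
  irreflexive e /\ symmetric e.

Definition connected_graph (n : nat) (e : rel 'I_n) : Prop :=
  forall i j : 'I_n, connect e i j.

Definition degree (n : nat) (e : rel 'I_n) (i : 'I_n) : nat := #|[set j | e i j]|.

Definition laplacian (R : realType) (n : nat) (e : rel 'I_n) : 'M[R]_n :=
  \matrix_(i, j) (if i == j then (degree e i)%:R else if e i j then -1 else 0).

Definition quad_form (R : realType) (n : nat) (L : 'M[R]_n) (x : 'cV[R]_n) : R :=
  (x^T *m L *m x) 0 0.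

(* Inverse Perron value:
   alpha_i(G) = min { x^T L x : x >= 0, sum_j x_j^2 = 1, x_i = 0 }
   (the minimum is attained by compactness; we take the infimum). *)
Definition alpha (R : realType) (n : nat) (e : rel 'I_n) (i : 'I_n) : R :=
  inf [set quad_form (laplacian R e) x | x in
        [set x : 'cV[R]_n | (forall j, 0 <= x j 0)
                            /\ \sum_j x j 0 ^+ 2 = 1 /\ x i 0 = 0]].

(* Effective resistance between i and j with unit resistors: inject a unit
   current at i and extract it at j; a potential p solves p L = e_i - e_j
   (solvable for connected G; u *m pinvmx L is such a solution), and
   r_ij = p_i - p_j is the resulting potential difference. *)
Definition unit_current (R : realType) (n : nat) (i j : 'I_n) : 'rV[R]_n :=
  delta_mx 0 i - delta_mx 0 j.

Definition potential (R : realType) (n : nat) (e : rel 'I_n) (i j : 'I_n) : 'rV[R]_n :=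
  unit_current R i j *m pinvmx (laplacian R e).

Definition resistance (R : realType) (n : nat) (e : rel 'I_n) (i j : 'I_n) : R :=
  potential R e i j 0 i - potential R e i j 0 j.

Definition res_ecc (R : realType) (n : nat) (e : rel 'I_n) (i : 'I_n) : R :=
  \big[Num.max/0]_(j : 'I_n) resistance R e i j.

From HB Require Import structures.
From mathcomp Require Import all_boot all_order all_algebra.
From mathcomp Require Import classical_sets reals.
From mathcomp Require Import ring boolp.
Set Implicit Arguments. Unset Strict Implicit. Unset Printing Implicit Defensive.
Import Order.TTheory GRing.Theory Num.Theory.
Local Open Scope ring_scope.

(* Let p be the potential of a unit current from i to j: its Dirichlet energy
   is r_ij and p_i - p_j = r_ij.  The vector |p - p_i|, normalised, is
   admissible for alpha_i; since taking absolute values does not increase the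
   energy, its Rayleigh quotient is at most r_ij / r_ij^2, so
   alpha_i <= 1 / r_ij.  Inverting needs alpha_i > 0, which follows from
   Cauchy-Schwarz for the energy: y_k^2 <= r_ik y^T L y whenever y_i = 0. *)

Lemma sqr_le_mul_of_quadratic_ge0 (R : realFieldType) (a b c : R) :
  0 <= a -> (forall t, 0 <= c + 2 * t * b + t ^+ 2 * a) -> b ^+ 2 <= a * c.
Proof.
move=> a_ge0 quad_ge0; have [a0|a_neq0] := eqVneq a 0.
  have [->|b_neq0] := eqVneq b 0; first by rewrite a0 expr0n mul0r.
  have := quad_ge0 (- (c + 1) / (2 * b)).
  have -> : c + 2 * (- (c + 1) / (2 * b)) * b + (- (c + 1) / (2 * b)) ^+ 2 * a = -1.
    by rewrite a0; field.
  by rewrite oppr_ge0 ler10.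
have a_gt0 : 0 < a by rewrite lt_neqAle eq_sym a_neq0.
have := quad_ge0 (- b / a).
have -> : c + 2 * (- b / a) * b + (- b / a) ^+ 2 * a = (a * c - b ^+ 2) / a by field.
by rewrite pmulr_lge0 ?invr_gt0 // subr_ge0.
Qed.

Section DirichletForm.
Variables (R : realFieldType) (n : nat) (e : rel 'I_n).

(* Summed over ordered pairs: every edge is counted twice. *)
Definition dirichlet (f g : 'I_n -> R) : R :=
  \sum_a \sum_(b | e a b) (f a - f b) * (g a - g b).

Lemma dirichlet_ge0 f : 0 <= dirichlet f f.
Proof. by apply: sumr_ge0 => a _; apply: sumr_ge0 => b _; rewrite -expr2 sqr_ge0. Qed.

Lemma dirichletZ c f :
  dirichlet (fun a => c * f a) (fun a => c * f a) = c ^+ 2 * dirichlet f f.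
Proof.
rewrite mulr_sumr; apply: eq_bigr => a _; rewrite mulr_sumr.
by apply: eq_bigr => b _; ring.
Qed.

Lemma dirichlet_shift c f :
  dirichlet (fun a => f a - c) (fun a => f a - c) = dirichlet f f.
Proof. by apply: eq_bigr => a _; apply: eq_bigr => b _; congr (_ * _); ring. Qed.

Lemma dirichlet_norm_le f :
  dirichlet (fun a => `|f a|) (fun a => `|f a|) <= dirichlet f f.
Proof.
apply: ler_sum => a _; apply: ler_sum => b _; rewrite -!expr2.
rewrite -[leRHS](real_normK (num_real _)) -[leLHS](real_normK (num_real _)).
by rewrite lerXn2r ?nnegrE ?normr_ge0 // ler_dist_dist.
Qed.

Lemma dirichlet_line f g t :
  dirichlet (fun a => f a + t * g a) (fun a => f a + t * g a) =
  dirichlet f f + 2 * t * dirichlet f g + t ^+ 2 * dirichlet g g.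
Proof.
rewrite !mulr_sumr -!big_split; apply: eq_bigr => a _ /=.
by rewrite !mulr_sumr -!big_split; apply: eq_bigr => b _ /=; ring.
Qed.

Lemma dirichlet_CauchySchwarz f g :
  dirichlet f g ^+ 2 <= dirichlet f f * dirichlet g g.
Proof.
rewrite mulrC; apply: sqr_le_mul_of_quadratic_ge0; first exact: dirichlet_ge0.
by move=> t; rewrite -dirichlet_line dirichlet_ge0.
Qed.

Hypothesis e_sym : symmetric e.

Lemma dirichlet_sum_mul f g :
  dirichlet f g = 2 * \sum_a f a * \sum_(b | e a b) (g a - g b).
Proof.
have swap (F : 'I_n -> 'I_n -> R) :
    \sum_a \sum_(b | e a b) F a b = \sum_a \sum_(b | e a b) F b a.
  under eq_bigr => a _ do rewrite big_mkcond.
  rewrite exchange_big /=; apply: eq_bigr => a _; rewrite [RHS]big_mkcond.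
  by apply: eq_bigr => b _; rewrite e_sym.
rewrite (_ : dirichlet f g = \sum_a \sum_(b | e a b) f a * (g a - g b)
                            + \sum_a \sum_(b | e a b) f b * (g b - g a)); last first.
  rewrite -big_split; apply: eq_bigr => a _.
  by rewrite -big_split; apply: eq_bigr => b _ /=; ring.
rewrite -(swap (fun a b => f a * (g a - g b))) mulr2n mulrDl mul1r.
by congr (_ + _); apply: eq_bigr => a _; rewrite mulr_sumr.
Qed.

End DirichletForm.

Section Laplacian.
Variables (R : realType) (n : nat) (e : rel 'I_n).
Hypothesis e_simple : simple_graph e.
Let e_irr : irreflexive e := e_simple.1.
Let e_sym : symmetric e := e_simple.2.

Notation L := (laplacian R e).

Lemma laplacian_row a (y : 'I_n -> R) :
  \sum_b L a b * y b = \sum_(b | e a b) (y a - y b).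
Proof.
rewrite (bigD1 a) //= mxE eqxx.
rewrite (eq_bigr (fun b => if e a b then - y b else 0)); last first.
  move=> b b_neq_a; rewrite mxE eq_sym (negbTE b_neq_a).
  by case: (e a b); rewrite ?mulN1r ?mul0r.
rewrite -big_mkcondr /= sumrB sumrN.
rewrite (eq_bigl (e a)); last by move=> b /=; case: eqP => [->|]; rewrite ?e_irr ?andbT.
congr (_ + _); rewrite sumr_const mulr_natl; congr (_ *+ _).
by apply: eq_card => b; rewrite unfold_in /= asboolb.
Qed.

Lemma dirichlet_laplacian (p : 'rV[R]_n) (y : 'cV[R]_n) :
  2 * (p *m L *m y) 0 0 = dirichlet e (fun a => p 0 a) (fun a => y a 0).
Proof.
rewrite dirichlet_sum_mul // -mulmxA mxE; congr (_ * _).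
by apply: eq_bigr => a _; rewrite mxE -laplacian_row.
Qed.

Lemma quad_formE (x : 'cV[R]_n) :
  2 * quad_form L x = dirichlet e (fun a => x a 0) (fun a => x a 0).
Proof.
rewrite /quad_form dirichlet_laplacian.
by congr dirichlet; apply: funext => a; rewrite mxE.
Qed.

Lemma quad_form_ge0 (x : 'cV[R]_n) : 0 <= quad_form L x.
Proof. by rewrite -(pmulr_rge0 _ (ltr0Sn R 1)) quad_formE dirichlet_ge0. Qed.

Hypothesis e_connected : connected_graph e.

Lemma laplacian_kernel_const (c : 'cV[R]_n) a b : L *m c = 0 -> c a 0 = c b 0.
Proof.
move=> Lc0.
have energy0 : dirichlet e (fun a => c a 0) (fun a => c a 0) = 0.
  by rewrite -quad_formE /quad_form -mulmxA Lc0 mulmx0 mxE mulr0.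
have edge_const x y : e x y -> c x 0 = c y 0.
  move=> exy; apply/eqP; rewrite -subr_eq0 -[_ == 0]orbb -mulf_eq0; apply/eqP.
  have sq_ge0 u v : 0 <= (c u 0 - c v 0) * (c u 0 - c v 0) by rewrite -expr2 sqr_ge0.
  have row0 : \sum_(v | e x v) (c x 0 - c v 0) * (c x 0 - c v 0) = 0.
    by apply: (psumr_eq0P _ energy0) => // u _; apply: sumr_ge0.
  exact: (psumr_eq0P _ row0).
have closed_level : closed e [pred x | c x 0 == c b 0].
  by move=> x y exy; rewrite !inE (edge_const x y exy).
by have := closed_connect closed_level (e_connected a b); rewrite !inE eqxx => /eqP.
Qed.

(* [pinvmx] solves [u *m L = v] whenever [v] lies in the row space of [L];
   since [ker L] is the constants, that row space contains [unit_current]. *)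
Lemma potentialP i j : potential R e i j *m L = unit_current R i j.
Proof.
apply: mulmxKpV; rewrite submxE; apply/eqP/matrixP => z k; rewrite [RHS]mxE.
have LC0 : L *m cokermx L = 0 by apply: mulmx_coker.
rewrite (ord1 z) (_ : _ 0 k = (unit_current R i j *m col k (cokermx L)) 0 0); last first.
  by rewrite !mxE; apply: eq_bigr => m _; rewrite [col _ _ _ _]mxE.
have LCk0 : L *m col k (cokermx L) = 0 by rewrite colE mulmxA LC0 mul0mx.
have := laplacian_kernel_const i j LCk0.
by rewrite /unit_current mulmxBl -!rowE !mxE => ->; rewrite subrr.
Qed.

Lemma dirichlet_potential i j (g : 'I_n -> R) :
  dirichlet e (fun a => potential R e i j 0 a) g = 2 * (g i - g j).
Proof.
have -> : g = (fun a => (\col_b g b) a 0) by apply: funext => a; rewrite mxE.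
by rewrite -dirichlet_laplacian potentialP /unit_current mulmxBl -!rowE !mxE.
Qed.

Lemma sqr_sub_le_resistance (y : 'cV[R]_n) i k :
  (y i 0 - y k 0) ^+ 2 <= resistance R e i k * quad_form L y.
Proof.
have := dirichlet_CauchySchwarz e (fun a => potential R e i k 0 a) (fun a => y a 0).
rewrite !dirichlet_potential -quad_formE -/(resistance R e i k).
rewrite exprMn (_ : _ * (2 * _) = 2 ^+ 2 * (resistance R e i k * quad_form L y));
  last by ring.
by rewrite ler_pM2l // exprn_gt0.
Qed.

End Laplacian.

Local Open Scope classical_set_scope.

Section InversePerronValue.
Variables (R : realType) (n : nat) (e : rel 'I_n) (i : 'I_n).
Hypothesis e_simple : simple_graph e.

Notation L := (laplacian R e).

Definition perron_domain : set 'cV[R]_n :=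
  [set x | (forall j, 0 <= x j 0) /\ \sum_j x j 0 ^+ 2 = 1 /\ x i 0 = 0].

Lemma alphaE : alpha R e i = inf [set quad_form L x | x in perron_domain].
Proof. by []. Qed.

Lemma alpha_ge0 : 0 <= alpha R e i.
Proof.
rewrite alphaE; have [[x Dx]|D0] := pselect (exists x, perron_domain x).
  apply: lb_le_inf; first by exists (quad_form L x), x.
  by move=> _ [y _ <-]; apply: quad_form_ge0.
rewrite (_ : perron_domain = set0) ?image_set0 ?inf0 //.
by apply/seteqP; split => x // Dx; apply: D0; exists x.
Qed.

Lemma alpha_le_quad_form x : perron_domain x -> alpha R e i <= quad_form L x.
Proof.
move=> Dx; apply: ge_inf; last by exists x.
by exists 0 => _ [y _ <-]; apply: quad_form_ge0.
Qed.

Definition normalized_abs (f : 'I_n -> R) : 'cV[R]_n :=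
  \col_a (`|f a| / Num.sqrt (\sum_b f b ^+ 2)).

Lemma normalized_abs_in_domain f :
  f i = 0 -> 0 < \sum_a f a ^+ 2 -> perron_domain (normalized_abs f).
Proof.
move=> fi0 N_gt0; split=> [a|]; first by rewrite mxE divr_ge0 ?sqrtr_ge0.
split; last by rewrite mxE fi0 normr0 mul0r.
under eq_bigr do rewrite mxE expr_div_n real_normK ?num_real // (sqr_sqrtr (ltW N_gt0)).
by rewrite -mulr_suml divff // gt_eqF.
Qed.

Lemma quad_form_normalized_abs_le f : 0 < \sum_a f a ^+ 2 ->
  2 * quad_form L (normalized_abs f) <= dirichlet e f f / \sum_a f a ^+ 2.
Proof.
move=> N_gt0; rewrite quad_formE //.
rewrite (_ : (fun a => _) = (fun a => (Num.sqrt (\sum_b f b ^+ 2))^-1 * `|f a|)); last first.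
  by apply: funext => a; rewrite mxE mulrC.
rewrite dirichletZ exprVn (sqr_sqrtr (ltW N_gt0)) mulrC.
by rewrite ler_wpM2r ?invr_ge0 ?(ltW N_gt0) ?dirichlet_norm_le.
Qed.

Hypothesis e_connected : connected_graph e.

Lemma alpha_gt0 x : perron_domain x -> 0 < alpha R e i.
Proof.
move=> Dx; pose S := \sum_k resistance R e i k.
have mass_le y : perron_domain y -> 1 <= quad_form L y * S.
  move=> [_ [<- yi0]]; rewrite mulr_sumr; apply: ler_sum => k _.
  have := sqr_sub_le_resistance e_simple e_connected y i k.
  by rewrite yi0 sub0r sqrrN mulrC.
have S_gt0 : 0 < S.
  rewrite ltNge; apply/negP => S_le0; have := mass_le x Dx.
  by rewrite leNgt (le_lt_trans (mulr_ge0_le0 (quad_form_ge0 e_simple x) S_le0)).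
apply: (lt_le_trans (_ : 0 < S^-1)); first by rewrite invr_gt0.
rewrite alphaE; apply: lb_le_inf; first by exists (quad_form L x), x.
by move=> _ [y Dy <-]; rewrite -[S^-1]mul1r ler_pdivrMr // mass_le.
Qed.

Lemma perron_test_vector j : 0 < resistance R e i j ->
  exists2 x, perron_domain x & quad_form L x <= (resistance R e i j)^-1.
Proof.
set r := resistance R e i j => r_gt0.
pose f a := potential R e i j 0 a - potential R e i j 0 i.
pose N := \sum_a f a ^+ 2.
have N_ge : r ^+ 2 <= N.
  rewrite /N (bigD1 j) //= /f -sqrrN opprB lerDl.
  by apply: sumr_ge0 => a _; apply: sqr_ge0.
have N_gt0 : 0 < N by apply: lt_le_trans N_ge; rewrite exprn_gt0.
exists (normalized_abs f); first by apply: normalized_abs_in_domain; rewrite /f ?subrr.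
have energy_f : dirichlet e f f = 2 * r.
  by rewrite /f dirichlet_shift dirichlet_potential.
have := quad_form_normalized_abs_le N_gt0; rewrite energy_f -mulrA ler_pM2l //.
move/le_trans; apply.
have -> : r^-1 = r / r ^+ 2 by rewrite expr2 invfM mulrA divff ?mul1r // lt0r_neq0.
by rewrite ler_wpM2l ?(ltW r_gt0) // lef_pV2 ?posrE ?exprn_gt0.
Qed.

Lemma resistance_le_inv_alpha j : resistance R e i j <= (alpha R e i)^-1.
Proof.
have [r_le0|r_gt0] := lerP (resistance R e i j) 0.
  by apply: le_trans r_le0 _; rewrite invr_ge0 alpha_ge0.
have [x Dx Qx_le] := perron_test_vector r_gt0.
have alpha_le := le_trans (alpha_le_quad_form Dx) Qx_le.
by rewrite -[resistance _ _ _ _]invrK lef_pV2 ?posrE ?invr_gt0 ?(alpha_gt0 Dx).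
Qed.

End InversePerronValue.

Theorem theorem4p1 (R : realType) (n : nat) (e : rel 'I_n) (i : 'I_n) :
  simple_graph e -> connected_graph e ->
  res_ecc R e i <= (alpha R e i)^-1.
Proof.
move=> e_simple e_connected; apply: bigmax_le => [|j _].
  by rewrite invr_ge0 alpha_ge0.
exact: resistance_le_inv_alpha.
Qed.
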